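(* Let $\alpha_1,\dots,\alpha_K\in\mathbb R^d\setminus\{0\}$ be distinct and $\gamma_1,\dots,\gamma_M>0$ ($M\le K$). Then there is at most one vector $\hat\theta\in\mathbb R^d$ with the following properties: (i) $\alpha_k^{T}\hat\theta=\gamma_k$ for $k=1,\dots,M$; (ii) there exists $\{\alpha_{j_1},\dots,\alpha_{j_p}\}\subseteq\{\alpha_{M+1},\dots,\alpha_K\}$ such that (a) $\alpha_1,\dots,\alpha_M,\alpha_{j_1},\dots,\alpha_{j_p}$ are linearly independent; (b) $\hat\theta\in\mathrm{span}\{\alpha_1,\dots,\alpha_M,\alpha_{j_1},\dots,\alpha_{j_p}\}$ and in the expansion of $\hat\theta$ in this basis the coefficient of each $\alpha_{j_m}$, $m=1,\dots,p$, is negative; (c) $\alpha_{j_m}^{T}\hat\theta=0$ for $m=1,\dots,p$; (d) $\alpha^{T}\hat\theta<0$ for every $\alpha\in\{\alpha_{M+1},\dots,\alpha_K\}\setminus\{\alpha_{j_1},\dots,\alpha_{j_p}\}$. (Uniqueness holds even if different vectors use different subsets in (ii).) *)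

From mathcomp Require Import all_boot all_order all_algebra.
Set Implicit Arguments. Unset Strict Implicit. Unset Printing Implicit Defensive.
Import Order.TTheory GRing.Theory Num.Theory.
Local Open Scope ring_scope.

Definition dotv (R : realFieldType) (d : nat) (u v : 'rV[R]_d) : R :=
  \sum_(i < d) u 0 i * v 0 i.

(* The index set {1..M} u J, with J a subset of {M+1..K} (0-based here). *)
Definition active_set (M K : nat) (J : {set 'I_K}) : {set 'I_K} :=
  [set k : 'I_K | (k < M)%N || (k \in J)].

Definition candidate_with (R : realFieldType) (d M K : nat)
    (alpha : 'I_K -> 'rV[R]_d) (gamma : 'I_M -> R) (theta : 'rV[R]_d)
    (J : {set 'I_K}) : Prop :=
  (forall j : 'I_K, j \in J -> (M <= j)%N) /\
  [/\
      (forall (k : 'I_K) (Hk : (k < M)%N), dotv (alpha k) theta = gamma (Ordinal Hk)),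
      free [seq alpha k | k <- enum (active_set M J)],
      (exists c : 'I_K -> R,
          theta = \sum_(k in active_set M J) c k *: alpha k /\
          (forall j : 'I_K, j \in J -> c j < 0)),
      (forall j : 'I_K, j \in J -> dotv (alpha j) theta = 0) &
      (forall k : 'I_K, (M <= k)%N -> k \notin J -> dotv (alpha k) theta < 0)].

Definition candidate (R : realFieldType) (d M K : nat)
    (alpha : 'I_K -> 'rV[R]_d) (gamma : 'I_M -> R) (theta : 'rV[R]_d) : Prop :=
  exists J : {set 'I_K}, candidate_with alpha gamma theta J.

From mathcomp Require Import all_boot all_order all_algebra.
Set Implicit Arguments. Unset Strict Implicit. Unset Printing Implicit Defensive.
Import Order.TTheory GRing.Theory Num.Theory.
Local Open Scope ring_scope.

(* Let theta be a candidate, with expansion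
   theta = sum_k c_k alpha_k, and let theta' satisfy (i) and
   alpha_k^T theta' <= 0 for all k > M (which every candidate does).  Then
   <theta - theta', theta> = sum_k c_k <alpha_k, theta - theta'>: the terms
   with k <= M vanish by (i), and for k in J we have c_k < 0 and
   <alpha_k, theta - theta'> = -<alpha_k, theta'> >= 0 by (c), so the sum is
   <= 0.  Applying this to two candidates in both directions and adding gives
   |theta1 - theta2|^2 <= 0. *)

Section DotProduct.

Variables (R : realFieldType) (d : nat).
Implicit Types u v w : 'rV[R]_d.

Lemma dotvC u v : dotv u v = dotv v u.
Proof. by apply: eq_bigr => i _; rewrite mulrC. Qed.

Lemma dotvBr u v w : dotv u (v - w) = dotv u v - dotv u w.
Proof. by rewrite /dotv -sumrB; apply: eq_bigr => i _; rewrite !mxE mulrBr. Qed.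

Lemma dotvBl u v w : dotv (v - w) u = dotv v u - dotv w u.
Proof. by rewrite dotvC dotvBr dotvC [dotv u w]dotvC. Qed.

Lemma dotv_suml (I : finType) (A : {pred I}) (c : I -> R) (a : I -> 'rV[R]_d) v :
  dotv (\sum_(k in A) c k *: a k) v = \sum_(k in A) c k * dotv (a k) v.
Proof.
rewrite /dotv; under eq_bigr => i _ do rewrite summxE mulr_suml.
rewrite exchange_big; apply: eq_bigr => k _.
by rewrite mulr_sumr; apply: eq_bigr => i _; rewrite !mxE mulrA.
Qed.

Lemma dotvv_ge0 u : 0 <= dotv u u.
Proof. by apply: sumr_ge0 => i _; rewrite -expr2 sqr_ge0. Qed.

Lemma dotvv_eq0 u : dotv u u = 0 -> u = 0.
Proof.
move=> u0; apply/rowP => i; rewrite mxE.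
have sq_ge0 (j : 'I_d) : predT j -> 0 <= u 0 j * u 0 j.
  by rewrite -expr2 sqr_ge0.
by move: (psumr_eq0P sq_ge0 u0 (i := i) isT) => /eqP; rewrite -expr2 sqrf_eq0 => /eqP.
Qed.

Lemma eq_of_dotv_subl_le0 u v :
  dotv (u - v) u <= 0 -> dotv (v - u) v <= 0 -> u = v.
Proof.
move=> le_u le_v; apply/eqP; rewrite -subr_eq0; apply/eqP/dotvv_eq0.
have split_sq : dotv (u - v) (u - v) = dotv (u - v) u + dotv (v - u) v.
  by rewrite !dotvBl !dotvBr [dotv v u]dotvC opprB.
by apply/le_anti; rewrite dotvv_ge0 andbT split_sq -(addr0 0) lerD.
Qed.

End DotProduct.

Section Candidates.

Variables (R : realFieldType) (d M K : nat).
Variables (alpha : 'I_K -> 'rV[R]_d) (gamma : 'I_M -> R).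

Definition satisfies_equalities (theta : 'rV[R]_d) :=
  forall (k : 'I_K) (Hk : (k < M)%N), dotv (alpha k) theta = gamma (Ordinal Hk).

Lemma candidate_with_equalities theta J :
  candidate_with alpha gamma theta J -> satisfies_equalities theta.
Proof. by case=> _ []. Qed.

Lemma candidate_with_dotv_le0 theta J :
  candidate_with alpha gamma theta J ->
  forall k : 'I_K, (M <= k)%N -> dotv (alpha k) theta <= 0.
Proof.
case=> _ [_ _ _ dotJ dot_out] k Mk.
by have [kJ | kNJ] := boolP (k \in J); [rewrite dotJ | exact/ltW/dot_out].
Qed.

Lemma candidate_with_dotv_subl_le0 theta theta' J :
  candidate_with alpha gamma theta J ->
  satisfies_equalities theta' ->
  (forall k : 'I_K, (M <= k)%N -> dotv (alpha k) theta' <= 0) ->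
  dotv (theta - theta') theta <= 0.
Proof.
case=> JM [eq_theta _ [c [theta_span c_lt0]] dotJ _] eq_theta' le_theta'.
rewrite dotvC {1}theta_span dotv_suml; apply: sumr_le0 => k.
rewrite inE dotvBr => /orP [kM | kJ]; first by rewrite eq_theta eq_theta' subrr mulr0.
rewrite dotJ // sub0r; apply: mulr_le0_ge0; first exact/ltW/c_lt0.
by rewrite oppr_ge0 le_theta' ?JM.
Qed.

End Candidates.

Theorem lemma3 (R : realFieldType) (d M K : nat)
    (alpha : 'I_K -> 'rV[R]_d) (gamma : 'I_M -> R)
    (HMK : (M <= K)%N)
    (Hnz : forall k : 'I_K, alpha k != 0)
    (Hinj : injective alpha)
    (Hpos : forall m : 'I_M, 0 < gamma m)
    (theta1 theta2 : 'rV[R]_d) :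
  candidate alpha gamma theta1 -> candidate alpha gamma theta2 ->
  theta1 = theta2.
Proof.
move=> [J1 cand1] [J2 cand2].
have le0 t t' J J' : candidate_with alpha gamma t J ->
    candidate_with alpha gamma t' J' -> dotv (t - t') t <= 0.
  move=> ct ct'; apply: (candidate_with_dotv_subl_le0 ct).
    exact: candidate_with_equalities ct'.
  exact: candidate_with_dotv_le0 ct'.
exact: eq_of_dotv_subl_le0 (le0 _ _ _ _ cand1 cand2) (le0 _ _ _ _ cand2 cand1).
Qed.
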